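(* Let $k\ge4$ be an integer, let $(\mathcal X,\mathcal F,t)$ be an instance of SET-COVER, and let $\mathbb G$ be the graph constructed from it as described in the context. If $E'$ is a good $k$-completion set of $\mathbb G$, then $\{S_j\in\mathcal F: (S_j,S'_j)\in E'\}$ is a set cover of $\mathcal X$ of size $|E'|$.
   Context: SET-COVER instance $(\mathcal X,\mathcal F,t)$: a finite set $\mathcal X$ of items, a family $\mathcal F$ of nonempty subsets of $\mathcal X$ such that every item lies in some set of $\mathcal F$, and an integer $t$; a set cover is a subfamily of $\mathcal F$ whose union is $\mathcal X$. For $k\ge4$ the graph $\mathbb G$ is built as follows: (1) for each item $x_i\in\mathcal X$ add vertices $x_i,x'_i$ and the item edge $(x_i,x'_i)$; (2) for each set $S_j\in\mathcal F$ add a set subgraph $\mathbb G_j$ isomorphic to $K_{k-2}$ minus one edge, whose missing edge is between vertices named $S_j$ and $S'_j$; (3) for each $x_i\in\mathcal X$ and $S_j\in\mathcal F$ with $x_i\in S_j$, join both $x_i$ and $x'_i$ to every vertex of $\mathbb G_j$; (4) for each edge of the graph obtained so far other than the item edges, add $k-2$ new vertices forming a $k$-clique together with the endpoints of that edge; (5) add a vertex $P$, add the edge $(S_j,P)$ for every $S_j\in\mathcal F$, and for each such edge add $k-2$ new vertices forming a $k$-clique with $S_j$ and $P$. A connected graph has a $(k,1)$-cover if each edge lies in a clique of order $k$; a $k$-completion set of $\mathbb G$ is a set $E'$ of non-edges of $\mathbb G$ such that $\mathbb G\cup E'$ has a $(k,1)$-cover; it is good if $E'\subseteq\{(S_j,S'_j):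 S_j\in\mathcal F\}$. *)

From mathcomp Require Import all_boot.
Set Implicit Arguments. Unset Strict Implicit. Unset Printing Implicit Defensive.

Definition is_set_cover (X : finType) (F C : {set {set X}}) : Prop :=
  C \subset F /\ \bigcup_(S in C) S = [set: X].

Section Construction.
Variables (X : finType) (F : {set {set X}}) (k : nat).

Definition fam := {S : {set X} | S \in F}.

(* vertices of steps (1)-(3): item vertices (x, false) = x_i, (x, true) = x'_i;
   set-subgraph vertices (S_j, a), a : 'I_(k-2); a = 0 is S_j, a = 1 is S'_j *)
Definition BV := ((X * bool) + (fam * 'I_(k-2)))%type.

Definition base_adj0 (u v : BV) : bool :=
  match u, v with
  | inl (x, s), inl (y, s') => (x == y) && ~~ s && s'
  | inl (x, _), inr (j, _) => x \in val j
  | inr (j, a), inr (j', b) =>                                   (* K_{k-2} - (S_j,S'_j) *)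
      (j == j') && (val a < val b) && ~~ ((val a == 0) && (val b == 1))
  | _, _ => false
  end.
Definition base_adj (u v : BV) : bool := base_adj0 u v || base_adj0 v u.

Definition item_edge (u v : BV) : bool :=
  match u, v with
  | inl (x, s), inl (y, s') => (x == y) && (s != s')
  | _, _ => false
  end.

(* edges (as unordered pairs) that receive a k-clique gadget in step (4) *)
Definition gadget_edge (e : {set BV}) : bool :=
  [exists u, exists v, [&& e == [set u; v], base_adj u v & ~~ item_edge u v]].

Definition GV := {p : {set BV} * 'I_(k-2) | gadget_edge p.1}.

(* V = base vertices + step-(4) vertices + step-(5) gadget vertices + P *)
Definition V := (((BV + GV) + (fam * 'I_(k-2))) + unit)%type.

Definition adj0 (u v : V) : bool :=
  match u, v with
  | inl (inl (inl a)), inl (inl (inl b)) => base_adj a b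
  | inl (inl (inr g)), inl (inl (inl b)) => b \in (val g).1
  | inl (inl (inr g)), inl (inl (inr h)) =>
      ((val g).1 == (val h).1) && ((val g).2 != (val h).2)
  | inl (inl (inl (inr (j, a)))), inr tt => val a == 0
  | inl (inr (j, _)), inr tt => true
  | inl (inr (j, _)), inl (inl (inl (inr (j', a)))) => (j == j') && (val a == 0)
  | inl (inr (j, i)), inl (inr (j', i')) => (j == j') && (i != i')
  | _, _ => false
  end.

Definition Gadj (u v : V) : bool := adj0 u v || adj0 v u.

Definition setv (j : fam) (a : 'I_(k-2)) : V := inl (inl (inl (inr (j, a)))).

Definition adjE (E' : {set {set V}}) (u v : V) : bool :=
  Gadj u v || ((u != v) && ([set u; v] \in E')).

Definition has_k1_cover (r : rel V) : Prop :=
  forall u v, r u v -> exists K : {set V},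
    [/\ u \in K, v \in K, #|K| = k & forall x y, x \in K -> y \in K -> x != y -> r x y].

Definition completion_set (E' : {set {set V}}) : Prop :=
  (forall e, e \in E' -> exists u v, [/\ e = [set u; v], u != v & ~~ Gadj u v])
  /\ has_k1_cover (adjE E').

Definition good (E' : {set {set V}}) : Prop :=
  forall e, e \in E' -> exists j a b,
    [/\ val a = 0, val b = 1 & e = [set setv j a; setv j b]].

Definition chosen (E' : {set {set V}}) : {set {set X}} :=
  [set val j | j : fam & [exists a, exists b,
     [&& val a == 0, val b == 1 & [set setv j a; setv j b] \in E']]].

End Construction.

(* For an item x, the item edge (x, x') lies in a k-clique K of G ∪ E'.  Edges
   of E' only join vertices of one set subgraph, and in G the only common
   neighbours of x and x' are the vertices of the set subgraphs G_j with
   x ∈ S_j (the item edge carries no step-(4) gadget).  Vertices of different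
   set subgraphs are never adjacent, so the k - 2 other vertices of K fill a
   whole G_j; in particular S_j and S'_j are adjacent in G ∪ E', i.e.
   (S_j, S'_j) ∈ E' and x is covered.  Counting is immediate since a good E'
   contains at most the one edge (S_j, S'_j) per set. *)

From mathcomp Require Import all_boot.

Set Implicit Arguments.
Unset Strict Implicit.
Unset Printing Implicit Defensive.

Section Reduction.
Variables (X : finType) (F : {set {set X}}) (k : nat).

Local Notation V := (V F k).

Definition itemv (x : X) (b : bool) : V := inl (inl (inl (inl (x, b)))).

Lemma chosen_sub (E' : {set {set V}}) : chosen E' \subset F.
Proof. by apply/subsetP => _ /imsetP [j _ ->]; apply: valP. Qed.

Lemma Gadj_item_edge (x : X) : Gadj (itemv x false) (itemv x true).
Proof. by rewrite /Gadj /= /base_adj /= eqxx. Qed.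

Lemma Gadj_item_common (x : X) (y : V) :
  Gadj (itemv x false) y -> Gadj (itemv x true) y ->
  exists j a, y = setv j a /\ x \in val j.
Proof.
case: y => [[[[[y s]|[j a]]|g]|[j a]]|[]]; rewrite /Gadj //=.
- by rewrite /base_adj /= !andbF !andbT !orbF !orFb !orbb => /andP [_ ->] /andP [].
- by rewrite /base_adj /= orbF orbb => xj _; exists j, a.
- have /existsP [u /existsP [v /and3P [/eqP -> _ item_uv]]] := valP g.
  rewrite !inE => /orP [] /eqP xu /orP [] /eqP xv.
  + by move: xv; rewrite -xu.
  + by move: item_uv; rewrite -xu -xv /= eqxx.
  + by move: item_uv; rewrite -xu -xv /= eqxx.
  + by move: xv; rewrite -xu.
Qed.

Lemma Gadj_setv_same (j j' : fam F) (a b : 'I_(k-2)) :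
  Gadj (setv j a) (setv j' b) -> j = j'.
Proof.
by rewrite /Gadj /= /base_adj /= => /orP [] /orP [] /andP [/andP [/eqP ->]].
Qed.

Variables (o0 o1 : 'I_(k-2)).
Hypotheses (o0E : val o0 = 0) (o1E : val o1 = 1).

Definition missing_edge (j : fam F) : {set V} := [set setv j o0; setv j o1].

Lemma Gadj_missing_edge (j : fam F) : ~~ Gadj (setv j o0) (setv j o1).
Proof. by rewrite /Gadj /= /base_adj /= o0E o1E !andbF. Qed.

Lemma missing_edgeE (j : fam F) (a b : 'I_(k-2)) :
  val a = 0 -> val b = 1 -> [set setv j a; setv j b] = missing_edge j.
Proof.
move=> a0 b1; rewrite /missing_edge.
by congr [set setv j _; setv j _]; apply: val_inj; rewrite ?o0E ?o1E.
Qed.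

Lemma missing_edge_inj : injective missing_edge.
Proof.
move=> j j' /setP /(_ (setv j o0)); rewrite !inE eqxx /=.
by move/esym/orP => [] /eqP [->].
Qed.

Lemma chosen_missing_edge (E' : {set {set V}}) :
  chosen E' = [set val j | j in [set j | missing_edge j \in E']].
Proof.
apply/setP => S; apply/imsetP/imsetP => -[j jE ->]; exists j => //; rewrite !inE in jE *.
  by case/existsP: jE => a /existsP [b /and3P [/eqP a0 /eqP b1]]; rewrite missing_edgeE.
by apply/existsP; exists o0; apply/existsP; exists o1; rewrite o0E o1E !eqxx.
Qed.

Section GoodCompletion.
Variable E' : {set {set V}}.
Hypothesis goodE : good E'.

Lemma good_edge_within_set (u v : V) :
  [set u; v] \in E' -> exists j a b, u = setv j a /\ v = setv j b.
Proof.
move=> /goodE [j [a [b [_ _ uv]]]].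
have : u \in [set setv j a; setv j b] by rewrite -uv set21.
have : v \in [set setv j a; setv j b] by rewrite -uv set22.
by rewrite !inE => /orP [] /eqP -> /orP [] /eqP ->; do 3!eexists.
Qed.

Lemma adjE_item_common (x : X) (y : V) :
  adjE E' (itemv x false) y -> adjE E' (itemv x true) y ->
  exists j a, y = setv j a /\ x \in val j.
Proof.
have no_item u b : [set itemv x b; u] \notin E'.
  by apply/negP => /good_edge_within_set [j [a [c []]]].
by rewrite /adjE !(negbTE (no_item y _)) !andbF !orbF; apply: Gadj_item_common.
Qed.

Lemma adjE_setv_same (j j' : fam F) (a b : 'I_(k-2)) :
  adjE E' (setv j a) (setv j' b) -> j = j'.
Proof.
case/orP => [/Gadj_setv_same //|/andP [_ /good_edge_within_set]].
by move=> [i [c [d [[-> _] [-> _]]]]].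
Qed.

Section ItemClique.
Variables (x : X) (K : {set V}).
Hypotheses (xK : itemv x false \in K) (x'K : itemv x true \in K).
Hypotheses (cardK : #|K| = k) (rest_gt0 : 0 < k - 2).
Hypothesis cliqueK : forall y z, y \in K -> z \in K -> y != z -> adjE E' y z.

Let K' := K :\ itemv x false :\ itemv x true.

Lemma card_clique_rest : #|K'| = k - 2.
Proof.
have x'x : itemv x true != itemv x false by apply/eqP => -[].
have := cardsD1 (itemv x false) K; rewrite xK cardK (cardsD1 (itemv x true)).
rewrite !inE x'K x'x => kE.
by rewrite [in RHS]kE !add1n !subSS subn0.
Qed.

Lemma clique_rest_setv (y : V) :
  y \in K' -> exists j a, y = setv j a /\ x \in val j.
Proof.
rewrite !inE => /and3P [yx' yx yK].
apply: adjE_item_common; apply: cliqueK => //; rewrite eq_sym //.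
Qed.

Lemma clique_rest_subgraph :
  exists2 j : fam F, x \in val j & K' = [set setv j a | a : 'I_(k-2)].
Proof.
have [y0 y0K'] : exists y0, y0 \in K' by apply/card_gt0P; rewrite card_clique_rest.
have [j [a [y0E xj]]] := clique_rest_setv y0K'.
exists j => //; apply/eqP; rewrite eqEcard card_clique_rest.
rewrite (leq_trans (leq_imset_card _ _)) ?card_ord // andbT.
apply/subsetP => y yK'; have [i [b [yE _]]] := clique_rest_setv yK'.
suff ij : i = j by rewrite yE ij imset_f.
have [yy0|yy0] := eqVneq y y0; first by move: y0E; rewrite -yy0 yE => -[].
have inK z : z \in K' -> z \in K by rewrite !inE => /and3P [].
by apply: (@adjE_setv_same i j b a); rewrite -yE -y0E; apply: cliqueK; rewrite ?inK.
Qed.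

End ItemClique.

Lemma good_missing_edges :
  E' = missing_edge @: [set j | missing_edge j \in E'].
Proof.
apply/setP => e; apply/idP/imsetP => [eE'|[j]]; last by rewrite inE => jE ->.
have [j [a [b [a0 b1 eE]]]] := goodE eE'.
by exists j; rewrite ?inE -(missing_edgeE j a0 b1) -eE.
Qed.

Lemma card_chosen : #|chosen E'| = #|E'|.
Proof.
rewrite chosen_missing_edge {2}good_missing_edges !card_imset //.
- exact: missing_edge_inj.
- exact: val_inj.
Qed.

Lemma good_completion_covers :
  has_k1_cover (adjE E') -> \bigcup_(S in chosen E') S = [set: X].
Proof.
move=> coverE; apply/setP => x; rewrite in_setT; apply/bigcupP.
have rest_gt0 : 0 < k - 2 by have := ltn_ord o0; rewrite o0E.
have xx' : adjE E' (itemv x false) (itemv x true) by rewrite /adjE Gadj_item_edge.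
have [K [xK x'K cardK cliqueK]] := coverE _ _ xx'.
have [j xj K'E] := clique_rest_subgraph xK x'K cardK rest_gt0 cliqueK.
have inK a : setv j a \in K.
  have : setv j a \in [set setv j c | c : 'I_(k-2)] by apply/imsetP; exists a.
  by rewrite -K'E !inE => /and3P [].
have o01 : setv j o0 != setv j o1 by apply/eqP => -[] /(congr1 val)/eqP; rewrite o0E o1E.
have := cliqueK _ _ (inK o0) (inK o1) o01.
rewrite /adjE (negbTE (Gadj_missing_edge j)) => /andP [_ jE'].
by exists (val j) => //; rewrite chosen_missing_edge imset_f // inE.
Qed.

End GoodCompletion.
End Reduction.

Theorem lemma4 (k : nat) (X : finType) (F : {set {set X}})
  (hk : 4 <= k)
  (hne : forall S, S \in F -> S != set0)
  (hcov : \bigcup_(S in F) S = [set: X])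
  (E' : {set {set V F k}})
  (hcomp : completion_set E')
  (hgood : good E') :
  is_set_cover F (chosen E') /\ #|chosen E'| = #|E'|.
Proof.
have lt0 : 0 < k - 2 by rewrite subn_gt0 (leq_trans _ hk).
have lt1 : 1 < k - 2 by rewrite ltn_subRL (leq_trans _ hk).
pose o0 := Ordinal lt0; pose o1 := Ordinal lt1.
have o0E : val o0 = 0 by []; have o1E : val o1 = 1 by [].
split; first split.
- exact: chosen_sub.
- exact: (good_completion_covers o0E o1E hgood hcomp.2).
- exact: (card_chosen o0E o1E hgood).
Qed.
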